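(* Let $a,d$ be real numbers and let $A_{n,k}(a,d)$ be the general Eulerian numbers defined below. Then for every integer $n\ge 0$ and every integer $k$ with $-1\le k\le n-1$, $$A_{n,k}(a,d)=\sum_{i=0}^{k+1}(-1)^i\big[(k+2-i)d-a\big]^n\binom{n+1}{i}.$$
   Context: For real numbers $a,d$, the general Eulerian numbers $A_{n,k}(a,d)$ (integers $n\ge 0$, $k$) are defined by $A_{0,-1}(a,d)=1$, $A_{n,k}(a,d)=0$ whenever $k\ge n$ or $k\le -2$ (in particular $A_{0,k}=0$ for $k\neq -1$), and for $n\ge 1$, $-1\le k\le n-1$: $$A_{n,k}(a,d)=(-a+(k+2)d)A_{n-1,k}(a,d)+(a+(n-k-1)d)A_{n-1,k-1}(a,d).$$ Here $x^0=1$ for all $x$ (including $x=0$). *)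

From Stdlib Require Import Reals ZArith.
Open Scope R_scope.

Fixpoint genEuler (a d : R) (n : nat) (k : Z) : R :=
  match n with
  | O => if Z.eqb k (-1) then 1 else 0
  | S m =>
      if orb (Z.leb (Z.of_nat (S m)) k) (Z.leb k (-2)) then 0
      else (- a + IZR (k + 2) * d) * genEuler a d m k
           + (a + IZR (Z.of_nat (S m) - k - 1) * d) * genEuler a d m (k - 1)
  end.

Fixpoint sum_upto (f : nat -> R) (N : nat) : R :=
  match N with
  | O => f O
  | S N' => sum_upto f N' + f N
  end.

(* Set K = k + 1 and F n K = sum_{i <= K} (-1)^i ((K+1-i)d - a)^n C(n+1, i), with C(n+1, i) = 0
   for i > n + 1.  Termwise, Pascal's rule together with the absorption identity
   (i+1) C(m, i+1) = (m-i) C(m, i) shows that F satisfies the defining recurrence of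
   A_{n,K-1}.  Moreover F n K = 0 for K > n, matching A_{n,k} = 0 for k >= n, so the
   identity holds for every K by induction on n. *)

From Stdlib Require Import Reals ZArith Lia Lra.
Open Scope R_scope.

(* [Binomial.C n i] is not 0 for i > n (the subtraction in n - i truncates). *)
Definition choose (n i : nat) : R := if Nat.leb i n then Binomial.C n i else 0.

Lemma binomial_C_n_0 n : Binomial.C n 0 = 1.
Proof. unfold Binomial.C; rewrite Nat.sub_0_r; simpl; field; apply INR_fact_neq_0. Qed.

Lemma binomial_C_n_n n : Binomial.C n n = 1.
Proof. unfold Binomial.C; rewrite Nat.sub_diag; simpl; field; apply INR_fact_neq_0. Qed.

Lemma choose_0 n : choose n 0 = 1.
Proof. apply binomial_C_n_0. Qed.

Lemma choose_gt n i : (n < i)%nat -> choose n i = 0.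
Proof. intros H; unfold choose; rewrite (proj2 (Nat.leb_gt i n) H); reflexivity. Qed.

Lemma choose_le n i : (i <= n)%nat -> choose n i = Binomial.C n i.
Proof. intros H; unfold choose; rewrite (proj2 (Nat.leb_le i n) H); reflexivity. Qed.

Lemma choose_succ n i : choose (S n) (S i) = choose n i + choose n (S i).
Proof.
  destruct (Nat.lt_trichotomy i n) as [Hlt | [-> | Hgt]].
  - rewrite !choose_le by lia; symmetry; apply Binomial.pascal; lia.
  - rewrite choose_le, (choose_le n n), choose_gt by lia.
    rewrite !binomial_C_n_n; ring.
  - rewrite !choose_gt by lia; ring.
Qed.

Lemma choose_absorb n i : (INR i + 1) * choose n (S i) = (INR n - INR i) * choose n i.
Proof.
  destruct (Nat.lt_trichotomy i n) as [Hlt | [-> | Hgt]].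
  - rewrite !choose_le by lia.
    rewrite Binomial.pascal_step3, minus_INR, S_INR by lia.
    field; pose proof (pos_INR i); lra.
  - rewrite choose_gt by lia; ring.
  - rewrite !choose_gt by lia; ring.
Qed.

Lemma sum_upto_ext f g N :
  (forall i, (i <= N)%nat -> f i = g i) -> sum_upto f N = sum_upto g N.
Proof.
  induction N as [|N IH]; intros H; simpl.
  - apply H; lia.
  - rewrite IH by (intros; apply H; lia); rewrite H by lia; reflexivity.
Qed.

Lemma sum_upto_scal c f N : sum_upto (fun i => c * f i) N = c * sum_upto f N.
Proof. induction N as [|N IH]; simpl; [|rewrite IH]; ring. Qed.

Lemma sum_upto_shift_split f g h N :
  f 0%nat = g 0%nat -> (forall i, f (S i) = g (S i) + h i) ->
  sum_upto f (S N) = sum_upto g (S N) + sum_upto h N.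
Proof.
  intros H0 HS; induction N as [|N IH].
  - simpl; rewrite H0, HS; ring.
  - change (sum_upto f (S N) + f (S (S N))
            = sum_upto g (S N) + g (S (S N)) + (sum_upto h N + h (S N))).
    rewrite IH, HS; ring.
Qed.

Section EulerSum.

Variables a d : R.

Definition euler_node (K i : nat) : R := (INR (K + 1) - INR i) * d - a.

Definition euler_term (n K i : nat) : R :=
  (-1) ^ i * euler_node K i ^ n * choose (S n) i.

Definition euler_sum (n K : nat) : R := sum_upto (euler_term n K) K.

Lemma euler_term_succ_0 m K : euler_term (S m) K 0 = euler_node K 0 * euler_term m K 0.
Proof. unfold euler_term; rewrite !choose_0; simpl; ring. Qed.

Lemma euler_term_succ_succ m K i :
  euler_term (S m) (S K) (S i) =
  euler_node (S K) 0 * euler_term m (S K) (S i)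
  + (a + (INR (S m) - INR (S K)) * d) * euler_term m K i.
Proof.
  unfold euler_term.
  assert (Hnode : euler_node K i = euler_node (S K) (S i)).
  { unfold euler_node; rewrite !plus_INR, !S_INR; cbn [INR]; ring. }
  assert (Hnode0 : euler_node (S K) 0 = euler_node (S K) (S i) + (INR i + 1) * d).
  { unfold euler_node; rewrite !plus_INR, !S_INR; cbn [INR]; ring. }
  assert (Hcoef : a + (INR (S m) - INR (S K)) * d
                  = (INR (S m) - INR i) * d - euler_node (S K) (S i)).
  { unfold euler_node; rewrite !plus_INR, !S_INR; cbn [INR]; ring. }
  pose proof (choose_absorb (S m) i) as Habs.
  rewrite Hnode, Hnode0, Hcoef, choose_succ.
  (* After Pascal's rule, the remaining discrepancy is d times the absorption identity. *)
  transitivity ((-1) ^ S i * euler_node (S K) (S i) ^ S m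
                  * (choose (S m) i + choose (S m) (S i))
                + (-1) ^ S i * euler_node (S K) (S i) ^ m * d
                  * ((INR i + 1) * choose (S m) (S i) - (INR (S m) - INR i) * choose (S m) i)).
  { rewrite Habs; ring. }
  simpl; ring.
Qed.

Lemma euler_sum_succ_0 m : euler_sum (S m) 0 = euler_node 0 0 * euler_sum m 0.
Proof. apply euler_term_succ_0. Qed.

Lemma euler_sum_succ_succ m K :
  euler_sum (S m) (S K) =
  euler_node (S K) 0 * euler_sum m (S K) + (a + (INR (S m) - INR (S K)) * d) * euler_sum m K.
Proof.
  unfold euler_sum; rewrite <- !sum_upto_scal.
  apply sum_upto_shift_split; [apply euler_term_succ_0 | apply euler_term_succ_succ].
Qed.

Lemma euler_sum_0_gt K : (0 < K)%nat -> euler_sum 0 K = 0.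
Proof.
  intros HK; unfold euler_sum, euler_term.
  destruct K as [|K]; [lia|].
  induction K as [|K IH]; simpl in *.
  - rewrite choose_0; unfold choose; simpl; rewrite binomial_C_n_n; ring.
  - rewrite IH by lia; rewrite choose_gt by lia; ring.
Qed.

Lemma euler_sum_gt n K : (n < K)%nat -> euler_sum n K = 0.
Proof.
  revert K; induction n as [|n IH]; intros K HK.
  - apply euler_sum_0_gt; lia.
  - destruct K as [|K]; [lia|].
    rewrite euler_sum_succ_succ, !IH by lia; ring.
Qed.

End EulerSum.

Lemma genEuler_succ a d n k : (-1 <= k <= Z.of_nat n)%Z ->
  genEuler a d (S n) k =
  (- a + IZR (k + 2) * d) * genEuler a d n k
  + (a + IZR (Z.of_nat (S n) - k - 1) * d) * genEuler a d n (k - 1).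
Proof.
  intros Hk; cbn [genEuler].
  rewrite (proj2 (Z.leb_gt (Z.of_nat (S n)) k)), (proj2 (Z.leb_gt k (-2))) by lia.
  reflexivity.
Qed.

Lemma genEuler_out_of_range a d n k :
  (k <= -2 \/ Z.of_nat n <= k)%Z -> genEuler a d n k = 0.
Proof.
  intros Hk; destruct n as [|n]; cbn [genEuler].
  - destruct (Z.eqb_spec k (-1)); [lia | reflexivity].
  - destruct Hk as [Hk | Hk].
    + rewrite (proj2 (Z.leb_le k (-2)) Hk), Bool.orb_true_r; reflexivity.
    + rewrite (proj2 (Z.leb_le _ k) Hk); reflexivity.
Qed.

Lemma genEuler_euler_sum a d n K :
  genEuler a d n (Z.of_nat K - 1) = euler_sum a d n K.
Proof.
  revert K; induction n as [|n IH]; intros K.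
  - destruct K as [|K].
    + unfold euler_sum, euler_term; simpl; rewrite choose_0; ring.
    + rewrite genEuler_out_of_range, euler_sum_0_gt by lia; reflexivity.
  - destruct (Nat.le_gt_cases K (S n)) as [HK | HK];
      [| rewrite genEuler_out_of_range, euler_sum_gt by lia; reflexivity].
    rewrite genEuler_succ by lia.
    replace (IZR (Z.of_nat K - 1 + 2)) with (INR (K + 1))
      by (rewrite INR_IZR_INZ; f_equal; lia).
    replace (IZR (Z.of_nat (S n) - (Z.of_nat K - 1) - 1)) with (INR (S n) - INR K)
      by (rewrite !INR_IZR_INZ, <- minus_IZR; f_equal; lia).
    destruct K as [|K].
    + rewrite (genEuler_out_of_range a d n (Z.of_nat 0 - 1 - 1)), IH, euler_sum_succ_0 by lia.
      unfold euler_node; simpl; ring.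
    + replace (Z.of_nat (S K) - 1 - 1)%Z with (Z.of_nat K - 1)%Z by lia.
      rewrite !IH, euler_sum_succ_succ.
      unfold euler_node; simpl; ring.
Qed.

Theorem lemma2p5 (a d : R) (n : nat) (k : Z)
  (hk1 : (-1 <= k)%Z) (hk2 : (k <= Z.of_nat n - 1)%Z) :
  genEuler a d n k =
  sum_upto (fun i : nat =>
     (-1) ^ i * (IZR (k + 2 - Z.of_nat i) * d - a) ^ n * Binomial.C (S n) i)
     (Z.to_nat (k + 1)).
Proof.
  set (K := Z.to_nat (k + 1)).
  replace k with (Z.of_nat K - 1)%Z at 1 by lia.
  rewrite genEuler_euler_sum.
  apply sum_upto_ext; intros i Hi.
  unfold euler_term, euler_node.
  rewrite choose_le by lia.
  replace (INR (K + 1) - INR i) with (IZR (k + 2 - Z.of_nat i)); [reflexivity|].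
  rewrite <- minus_INR, INR_IZR_INZ by lia.
  f_equal; lia.
Qed.
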